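(* Let $r>1$ be an integer and $\mathcal{Z}\subseteq\{1,2,\dots,r-1\}$. Define integers $\xi_1,\dots,\xi_r$ by $\xi_1=1$ and, for $2\le\ell\le r$, $\xi_\ell=\xi_{\ell-1}-1$ if $\ell-1\in\mathcal{Z}$ and $\xi_\ell=2\xi_{\ell-1}$ otherwise. Then $\mathcal{Z}$ is admissible for $(1,1,r)$ if and only if $\xi_\ell>0$ for all $\ell=1,\dots,r$.
   Context: For integers $n,\ell>0$ and a finite-support integer sequence $\mu=(\mu_i)_{i\ge1}$, $\mathsf{K}_\ell(\mu,n)=n^\ell-\sum_{i=1}^{\ell}\mu_i n^{\ell-i}$ (with $0^0=1$). With $n_0=n_1=1$, for a pair $(\eta,\omega)$ of nonnegative integer sequences $(\eta_\ell)_{\ell\ge1},(\omega_\ell)_{\ell\ge1}$ with finite support, let $\mathsf{K}^\pm_\ell=\mathsf{K}_\ell(\eta\pm\omega,n_0\pm n_1)$, let $\mathsf{r}(\eta,\omega)$ be the largest index in the union of their supports, and $\mathsf{K}^\pm=\mathsf{K}^\pm_{\mathsf{r}(\eta,\omega)}$. A subset $\mathcal{Z}\subseteq\{1,\dots,r-1\}$ is admissible for $(n_0,n_1,r)$ if there exists such a pair $(\eta,\omega)$ with $\mathsf{r}(\eta,\omega)=r$ and $\mathsf{K}^+=\mathsf{K}^-=0$ such that, for $\ell\in\{1,\dots,r-1\}$, the inequality $\mathsf{K}^+_\ell\ge|\mathsf{K}^-_\ell|$ fails exactly when $\ell\in\mathcal{Z}$. *)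

From mathcomp Require Import all_boot all_order all_algebra.
Set Implicit Arguments. Unset Strict Implicit. Unset Printing Implicit Defensive.
Import Order.TTheory GRing.Theory Num.Theory.
Local Open Scope ring_scope.

(* Sequences (mu_i)_{i>=1} are functions nat -> _ ; the value at index 0 is
   never used. *)

Definition Kl (mu : nat -> int) (n : int) (l : nat) : int :=
  n ^+ l - \sum_(1 <= i < l.+1) mu i * n ^+ (l - i).

Definition rdef (eta omega : nat -> nat) (r : nat) : Prop :=
  (1 <= r)%N /\ (0 < eta r + omega r)%N /\
  (forall i : nat, (r < i)%N -> eta i = 0%N /\ omega i = 0%N).

Definition Kplus (n0 n1 : nat) (eta omega : nat -> nat) (l : nat) : int :=
  Kl (fun i => (eta i)%:Z + (omega i)%:Z) (n0%:Z + n1%:Z) l.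

Definition Kminus (n0 n1 : nat) (eta omega : nat -> nat) (l : nat) : int :=
  Kl (fun i => (eta i)%:Z - (omega i)%:Z) (n0%:Z - n1%:Z) l.

(* Z (a subset of {1,...,r-1}, given as a boolean predicate) is admissible
   for (n0,n1,r). Finite support of eta, omega is implied by rdef. *)
Definition admissible (n0 n1 r : nat) (Z : pred nat) : Prop :=
  exists eta omega : nat -> nat,
    rdef eta omega r /\
    Kplus n0 n1 eta omega r = 0 /\ Kminus n0 n1 eta omega r = 0 /\
    forall l : nat, (1 <= l)%N -> (l <= r.-1)%N ->
      (~ (`|Kminus n0 n1 eta omega l| <= Kplus n0 n1 eta omega l) <-> Z l).

(* xi Z l = xi_l for l >= 1: xi_1 = 1, xi_l = xi_{l-1} - 1 if l-1 in Z,
   else 2 xi_{l-1}.  (xi Z 0 is a dummy value.) *)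
Fixpoint xi (Z : pred nat) (l : nat) : int :=
  match l with
  | 0%N => 1
  | l'.+1 => match l' with
             | 0%N => 1
             | _ => if Z l' then xi Z l' - 1 else 2 * xi Z l'
             end
  end.

From mathcomp Require Import all_boot all_order all_algebra.
From mathcomp Require Import zify.
Import Order.TTheory GRing.Theory Num.Theory.
Local Open Scope ring_scope.

(* For (n0, n1) = (1, 1) we have K^-_l = omega_l - eta_l and
   K^+_{l+1} = 2 K^+_l - (eta_{l+1} + omega_{l+1}), so |K^-_l| <= eta_l + omega_l.
   Hence K^+ at most doubles at each step and strictly decreases at an index of
   Z, which gives K^+_l <= xi_{l+1}; since K^+_r = 0 while eta_r + omega_r > 0,
   K^+ is positive below r and so is xi.  Conversely, when xi > 0 the sequences
   eta_l = xi_l + 1 on Z, eta_r = omega_r = xi_r, and 0 elsewhere, give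
   K^+_l = xi_{l+1} for l < r, with failures exactly on Z. *)

Lemma Kl0 (mu : nat -> int) (n : int) : Kl mu n 0 = 1.
Proof. by rewrite /Kl big_geq. Qed.

Lemma KlS (mu : nat -> int) (n : int) (l : nat) :
  Kl mu n l.+1 = n * Kl mu n l - mu l.+1.
Proof.
rewrite /Kl big_nat_recr //= subnn expr0 mulr1 exprS mulrBr mulr_sumr opprD addrA.
congr (_ - _ - _); apply: eq_big_nat => i /andP[_ hi].
by rewrite subSn // exprS mulrCA.
Qed.

Lemma Kplus11S (eta omega : nat -> nat) (l : nat) :
  Kplus 1 1 eta omega l.+1 =
    2 * Kplus 1 1 eta omega l - ((eta l.+1)%:Z + (omega l.+1)%:Z).
Proof. by rewrite /Kplus KlS. Qed.

Lemma Kminus_diagS (n : nat) (eta omega : nat -> nat) (l : nat) :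
  Kminus n n eta omega l.+1 = (omega l.+1)%:Z - (eta l.+1)%:Z.
Proof. by rewrite /Kminus KlS subrr mul0r sub0r opprB. Qed.

Lemma xi_rec (Z : pred nat) (l : nat) :
  (0 < l)%N -> xi Z l.+1 = if Z l then xi Z l - 1 else 2 * xi Z l.
Proof. by case: l. Qed.

Section Necessity.

Context {eta omega : nat -> nat}.
Local Notation Kp := (Kplus 1 1 eta omega).
Local Notation Km := (Kminus 1 1 eta omega).

Lemma Kplus11S_le (l : nat) : Kp l.+1 <= 2 * Kp l.
Proof. rewrite Kplus11S; lia. Qed.

(* The failure means Kp l.+1 < |omega - eta| <= eta + omega = 2 Kp l - Kp l.+1. *)
Lemma Kplus11S_lt (l : nat) : ~ (`|Km l.+1| <= Kp l.+1) -> Kp l.+1 < Kp l.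
Proof. rewrite Kminus_diagS Kplus11S; lia. Qed.

Lemma Kplus11_gt0_le (l m : nat) : (m <= l)%N -> 0 < Kp l -> 0 < Kp m.
Proof.
elim: l => [|l IHl]; first by rewrite leqn0 => /eqP->.
rewrite leq_eqVlt ltnS => /orP[/eqP-> // | le_ml] Kl_gt0.
by apply: IHl => //; have := Kplus11S_le l; lia.
Qed.

Lemma Kplus11_pred_gt0 (r : nat) :
  rdef eta omega r -> Kp r = 0 -> 0 < Kp r.-1.
Proof.
case=> r_gt0 [supp_r _] Kr0; have := Kplus11S eta omega r.-1.
by rewrite prednK //; lia.
Qed.

Lemma Kplus11_le_xi (Z : pred nat) (l : nat) :
  (forall k, (0 < k)%N -> (k <= l)%N -> Z k -> ~ (`|Km k| <= Kp k)) ->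
  Kp l <= xi Z l.+1.
Proof.
elim: l => [|l IHl] fails; first by rewrite /Kplus Kl0.
have le_Kl_xi : Kp l <= xi Z l.+1 by apply: IHl => k k_gt0 le_kl; apply: fails; lia.
rewrite xi_rec //; case: ifP => Zl.
- by have := Kplus11S_lt l (fails l.+1 isT (leqnn _) Zl); lia.
- by have := Kplus11S_le l; lia.
Qed.

End Necessity.

Lemma admissible11_xi_gt0 (r : nat) (Z : pred nat) :
  admissible 1 1 r Z -> forall l, (0 < l)%N -> (l <= r)%N -> 0 < xi Z l.
Proof.
case=> eta [omega [r_def [Kr0 [_ fails_iff]]]] l l_gt0 le_lr.
have le_pred : (l.-1 <= r.-1)%N by rewrite -!subn1 leq_sub2r.
have Kpred_gt0 := Kplus11_gt0_le r.-1 l.-1 le_pred (Kplus11_pred_gt0 r r_def Kr0).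
have := Kplus11_le_xi Z l.-1 (fun k k_gt0 le_kl =>
  proj2 (fails_iff k k_gt0 (leq_trans le_kl le_pred))).
rewrite prednK //; lia.
Qed.

Section Sufficiency.

Variables (Z : pred nat) (r : nat).
Hypothesis xi_gt0 : forall l, (0 < l)%N -> (l <= r)%N -> 0 < xi Z l.

Definition xi_eta (l : nat) : nat :=
  if l == r then absz (xi Z r) else if Z l then absz (xi Z l + 1) else 0%N.

Definition xi_omega (l : nat) : nat := if l == r then absz (xi Z r) else 0%N.

Local Notation Kp := (Kplus 1 1 xi_eta xi_omega).
Local Notation Km := (Kminus 1 1 xi_eta xi_omega).

Lemma Kplus_xi_witness (l : nat) : (l <= r.-1)%N -> Kp l = xi Z l.+1.
Proof.
elim: l => [|l IHl] lt_lr; first by rewrite /Kplus Kl0.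
have /negbTE l1_neq_r : l.+1 != r by lia.
have := xi_gt0 l.+1 isT (leq_trans lt_lr (leq_pred r)).
rewrite Kplus11S IHl ?(ltnW lt_lr) // [xi Z l.+2]xi_rec // /xi_eta /xi_omega l1_neq_r.
by case: (Z l.+1); lia.
Qed.

Lemma xi_witness_rdef : (0 < r)%N -> (forall l, Z l -> (l <= r)%N) ->
  rdef xi_eta xi_omega r.
Proof.
move=> r_gt0 Z_le_r; split=> //; split.
  by have := xi_gt0 r r_gt0 (leqnn r); rewrite /xi_eta /xi_omega eqxx; lia.
move=> i lt_ri; have /negbTE i_neq_r : i != r by lia.
rewrite /xi_eta /xi_omega i_neq_r; case Zi: (Z i) => //.
by have := Z_le_r i Zi; lia.
Qed.

Lemma Kplus_xi_witness_r : (0 < r)%N -> Kp r = 0.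
Proof.
move=> r_gt0; have := xi_gt0 r r_gt0 (leqnn r).
have := Kplus11S xi_eta xi_omega r.-1.
rewrite (Kplus_xi_witness _ (leqnn r.-1)) prednK // => ->.
by rewrite /xi_eta /xi_omega eqxx; lia.
Qed.

Lemma Kminus_xi_witness_r : (0 < r)%N -> Km r = 0.
Proof.
move=> r_gt0; rewrite -(prednK r_gt0) Kminus_diagS prednK //.
by rewrite /xi_eta /xi_omega eqxx subrr.
Qed.

Lemma xi_witness_fails_iff (l : nat) : (0 < l)%N -> (l <= r.-1)%N ->
  ~ (`|Km l| <= Kp l) <-> Z l.
Proof.
case: l => // l _ le_lr.
have /negbTE l1_neq_r : l.+1 != r by lia.
have := xi_gt0 l.+1 isT (leq_trans le_lr (leq_pred r)).
rewrite Kminus_diagS Kplus_xi_witness // [xi Z l.+2]xi_rec // /xi_eta /xi_omega l1_neq_r.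
by case: (Z l.+1) => xi_l_gt0; split=> //; lia.
Qed.

Lemma xi_gt0_admissible11 : (0 < r)%N -> (forall l, Z l -> (l <= r)%N) ->
  admissible 1 1 r Z.
Proof.
move=> r_gt0 Z_le_r; exists xi_eta, xi_omega.
split; first exact: xi_witness_rdef.
split; first exact: Kplus_xi_witness_r.
split; first exact: Kminus_xi_witness_r.
exact: xi_witness_fails_iff.
Qed.

End Sufficiency.

Theorem lemma5 (r : nat) (Z : pred nat) :
  (1 < r)%N ->
  (forall l : nat, Z l -> (1 <= l)%N && (l <= r.-1)%N) ->
  admissible 1 1 r Z <-> (forall l : nat, (1 <= l)%N -> (l <= r)%N -> 0 < xi Z l).
Proof.
move=> r_gt1 Z_range; split; first exact: admissible11_xi_gt0.
move=> xi_gt0; apply: (xi_gt0_admissible11 Z r xi_gt0 (ltnW r_gt1)) => l Zl.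
by have := Z_range l Zl; lia.
Qed.
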